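(* Let $k\ge2$ and $\ell\ge1$. Then $D_k(\ell)\ge (k+1)k^{\ell/2-1}-1$ if $\ell$ is even, and $D_k(\ell)\ge 2k^{(\ell-1)/2}-1$ if $\ell$ is odd.
   Context: Labeled chip-firing on the infinite rooted directed $k$-ary tree (each vertex has $k$ children ordered left to right, root on layer $1$): a vertex with at least $k$ chips may fire by choosing any $k$ of its chips and sending the $i$-th smallest label among them to its $i$-th leftmost child; a configuration is stable when no vertex has $\ge k$ chips. Starting with $k^\ell$ chips labeled $1,\dots,k^\ell$ at the root, every stable configuration has exactly one chip on each vertex of layer $\ell+1$ and none elsewhere, and is identified with the permutation of labels read left to right on layer $\ell+1$. $D_k(\ell)$ denotes the maximum, over all reachable stable configurations, of the length of the longest strictly decreasing subsequence of the corresponding permutation. *)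

From Stdlib Require Import Relations.
From mathcomp Require Import all_boot.
Set Implicit Arguments. Unset Strict Implicit. Unset Printing Implicit Defensive.

(* Vertices of the infinite rooted k-ary tree: the root is [::]; the vertex
   [:: i1; ...; in] (each i_j < k) is reached from the root by taking child
   i1, then i2, ... (children indexed 0..k-1 from left to right).  The vertex
   v lies on layer (size v).+1; its i-th leftmost child is rcons v i. *)
Definition vertex := seq nat.

Definition config := vertex -> seq nat.

Definition init_config (k l : nat) : config :=
  fun v => if v == [::] then iota 1 (k ^ l) else [::].

Definition fire_step (k : nat) (C C' : config) : Prop :=
  exists (v : vertex) (S R : seq nat),
    [/\ size S = k, perm_eq (C v) (S ++ R),
        C' v = R,
        (forall i, i < k -> C' (rcons v i) = nth 0 (sort leq S) i :: C (rcons v i))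
      & (forall w, w != v -> (forall i, i < k -> w != rcons v i) -> C' w = C w)].

Definition reachable (k l : nat) (C : config) : Prop :=
  clos_refl_trans config (fire_step k) (init_config k l) C.

Definition stable (k : nat) (C : config) : Prop := forall v, size (C v) < k.

Fixpoint layer_words (k n : nat) : seq vertex :=
  if n is n'.+1 then [seq i :: w | i <- iota 0 k, w <- layer_words k n'] else [:: [::]].

(* The permutation associated with a stable configuration: labels read left
   to right on layer l+1 (each such vertex carries exactly one chip). *)
Definition config_perm (k l : nat) (C : config) : seq nat :=
  [seq head 0 (C v) | v <- layer_words k l].

Definition lds (p : seq nat) : nat :=
  \max_(m : (size p).-tuple bool | sorted gtn (mask m p)) size (mask m p).

From Stdlib Require Import Relations Lia.
From mathcomp Require Import all_boot all_order zify.
Set Implicit Arguments. Unset Strict Implicit. Unset Printing Implicit Defensive.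
Import Order.TTheory.

(* Firing the chips of a vertex k at a time, smallest first, turns an arithmetic
   progression a + b m of labels at v into the progressions (a + b i) + (b k) m at
   its children i.  Starting from 1, ..., k^l at the root, this reaches the
   configuration in which the leaf reached by the children d_1, ..., d_l carries
   1 + d_1 + d_2 k + ... + d_l k^(l-1).  Leaves are read in lexicographic order of
   their digit words, so a decreasing subsequence is a lexicographically increasing
   list of words whose values decrease.  From such a list of s words of length n
   one gets k s + k - 1 words of length n + 2: wrap it in first digit a and last
   digit k-1-a for a = 0, ..., k-1, and put the word (a, 0, ..., 0, k-a) before the
   a-th block for a > 0 (this needs the inner words to be nonzero).  Starting
   from [1] and from the k words (a, k-1-a) gives
   2 k^p - 1 and (k+1) k^p - 1 words of lengths 2p+1 and 2p+2. *)

Definition lexlt : rel (seq nat) := <%O : rel (seqlexi nat).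

Lemma lexlt_cons x u y v : lexlt (x :: u) (y :: v) = (x < y) || (x == y) && lexlt u v.
Proof. by rewrite /lexlt /= [X in X = _]ltxi_cons !leEnat; case: ltngtP. Qed.

Lemma lexlt_irr : irreflexive lexlt.
Proof. exact: (@ltxx _ (seqlexi nat)). Qed.

Lemma lexlt_trans : transitive lexlt.
Proof. exact: (@lt_trans _ (seqlexi nat)). Qed.

Lemma lexlt_cat u v x y : size u = size v -> lexlt u v -> lexlt (u ++ x) (v ++ y).
Proof.
elim: u v => [|a u IH] [|b v] //= [e]; rewrite !lexlt_cons => /orP[->//|/andP[-> h]].
by rewrite IH ?orbT.
Qed.

Lemma lexlt_nseq0 u : has (predC1 0) u -> lexlt (nseq (size u) 0) u.
Proof. by elim: u => [|[|a] u IH] //=; rewrite lexlt_cons. Qed.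

Lemma subseq_sorted_subset (T : eqType) (r : rel T) (s t : seq T) :
  irreflexive r -> transitive r -> sorted r s -> sorted r t -> {subset t <= s} ->
  subseq t s.
Proof.
move=> r_irr r_tr s_sorted t_sorted t_sub.
apply/(subseq_uniqP (sorted_uniq r_tr r_irr s_sorted)).
apply: (irr_sorted_eq r_tr r_irr t_sorted (sorted_filter r_tr _ s_sorted)) => x.
by rewrite mem_filter; case: (boolP (x \in t)) => // /t_sub.
Qed.

Lemma prefix_rcons_cat (T : eqType) (v u : seq T) (c i : T) :
  prefix (rcons v c) (rcons v i ++ u) = (c == i).
Proof.
by rewrite -[rcons v c]cats0 prefix_catr ?size_rcons // eqseq_rcons eqxx prefix0s andbT.
Qed.

Lemma rcons_cat_neq (T : eqType) (v u : seq T) (i : T) : (rcons v i ++ u == v) = false.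
Proof. by apply/eqP => /(congr1 size); rewrite size_cat size_rcons; lia. Qed.

Lemma leq_lds p q : subseq q p -> sorted gtn q -> size q <= lds p.
Proof.
case/subseqP=> m size_m -> m_sorted.
have m_tuple : size m == size p by rewrite size_m.
exact: (@leq_bigmax_cond _ (fun t : (size p).-tuple bool => sorted gtn (mask t p))
  (fun t => size (mask t p)) (Tuple m_tuple)).
Qed.

Section DigitWords.
Variable k : nat.

Definition digit_word n (w : seq nat) := (size w == n) && all (gtn k) w.

(* The first digit is the least significant one. *)
Definition wordval (w : seq nat) := foldr (fun d acc => d + k * acc) 0 w.

Lemma wordval_rcons u d : wordval (rcons u d) = wordval u + k ^ size u * d.
Proof. by elim: u => [|x u IH] /=; rewrite ?IH ?expnS; lia. Qed.

Lemma wordval_cons_rcons a b u : wordval (a :: rcons u b) = a + k * (wordval u + k ^ size u * b).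
Proof. by rewrite /= wordval_rcons. Qed.

Lemma wordval_nseq0 n : wordval (nseq n 0) = 0.
Proof. by elim: n => //= n ->; rewrite muln0. Qed.

Lemma wordval_lt u : all (gtn k) u -> wordval u < k ^ size u.
Proof.
elim: u => [|x u IH] //= /andP[x_lt /IH u_lt]; rewrite expnS.
have := leq_mul (leqnn k) u_lt; lia.
Qed.

Lemma wordval_gt0 u : 0 < k -> has (predC1 0) u -> 0 < wordval u.
Proof. by move=> k_gt0; elim: u => [|x u IH] //= /orP[|/IH]; nia. Qed.

Lemma mem_layer_words n w : (w \in layer_words k n) = digit_word n w.
Proof.
rewrite /digit_word; elim: n w => [|n IH] w /=; first by rewrite inE; case: w.
apply/allpairsP/idP => [[[i u] /= [+ + ->]]|].
  by rewrite mem_iota IH /= => i_lt /andP[/eqP -> ->]; rewrite eqxx andbT.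
case: w => [|i u] //= /andP[size_u /andP[i_lt u_digits]].
by exists (i, u); rewrite mem_iota IH -eqSS size_u u_digits.
Qed.

Lemma layer_words_sorted n : sorted lexlt (layer_words k n).
Proof.
rewrite (sorted_pairwise lexlt_trans).
elim: n => [|n IH] //=; set L := layer_words k n.
suff: forall a m, pairwise lexlt [seq i :: w | i <- iota a m, w <- L] by apply.
move=> a m; elim: m a => [|m IHm] a //=.
rewrite pairwise_cat IHm andbT pairwise_map.
apply/andP; split.
  apply/allrelP=> _ _ /mapP[w _ ->] /allpairsP[[i u] /= [+ _ ->]].
  by rewrite mem_iota lexlt_cons => /andP[-> _].
by apply: sub_pairwise IH => u v /=; rewrite lexlt_cons ltnn eqxx.
Qed.

End DigitWords.

Section DecreasingChain.
Variable k : nat.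
Hypothesis k_gt1 : 1 < k.

Local Notation wordval := (wordval k).

Definition nonzero_word n w := digit_word k n w && has (predC1 0) w.

Definition inverted (u v : seq nat) :=
  [&& lexlt u v, wordval v < wordval u & size u == size v].

Definition wrap a b (C : seq (seq nat)) := [seq a :: rcons u b | u <- C].

Lemma wrap_cons a b u C : wrap a b (u :: C) = (a :: rcons u b) :: wrap a b C.
Proof. by []. Qed.

Lemma last_wrap a b u C : last (a :: rcons u b) (wrap a b C) = a :: rcons (last u C) b.
Proof. exact: (last_map (fun u => a :: rcons u b)). Qed.

Definition separator n a := a :: rcons (nseq n 0) (k - a).

Fixpoint blocks C n a m :=
  if m is m'.+1 then separator n a :: wrap a (k.-1 - a) C ++ blocks C n a.+1 m'
  else [::].

Definition chain_step C n := wrap 0 k.-1 C ++ blocks C n 1 k.-1.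

Fixpoint chain n :=
  match n with
  | 0 => [::]
  | 1 => [:: [:: 1]]
  | 2 => [seq [:: a; k.-1 - a] | a <- iota 0 k]
  | n'.+2 => chain_step (chain n') n'
  end.

Lemma chainSS n : chain n.+3 = chain_step (chain n.+1) n.+1.
Proof. by []. Qed.

Lemma inverted_wrap a b u v : inverted u v -> inverted (a :: rcons u b) (a :: rcons v b).
Proof.
case/and3P=> uv vu /eqP suv; rewrite /inverted !wordval_cons_rcons lexlt_cons ltnn eqxx /=.
rewrite -!cats1 lexlt_cat // !cats1 !size_rcons suv eqxx andbT ltn_add2l ltn_pmul2l; last lia.
by rewrite ltn_add2r.
Qed.

Lemma inverted_wrap_separator n a u :
  nonzero_word n u -> inverted (a :: rcons u (k.-1 - a)) (separator n a.+1).
Proof.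
case/andP=> /andP[/eqP su _] u_nz; have := wordval_gt0 (ltnW k_gt1) u_nz.
rewrite /inverted /separator !wordval_cons_rcons lexlt_cons ltnSn wordval_nseq0 /=.
rewrite !size_rcons size_nseq su.
have -> : k - a.+1 = k.-1 - a by lia.
rewrite eqxx andbT; nia.
Qed.

Lemma inverted_separator_wrap n a u :
  a < k -> nonzero_word n u -> inverted (separator n a) (a :: rcons u (k.-1 - a)).
Proof.
move=> a_lt /andP[/andP[/eqP su u_digits] u_nz]; have := wordval_lt u_digits.
rewrite /inverted /separator !wordval_cons_rcons lexlt_cons ltnn eqxx /=.
rewrite -!cats1 lexlt_cat ?size_nseq //; last by rewrite -su lexlt_nseq0.
rewrite !cats1 wordval_nseq0 /= !size_rcons size_nseq su eqxx andbT.
have -> : k - a = (k.-1 - a).+1 by lia.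
nia.
Qed.

Lemma sorted_wrap a b C : sorted inverted C -> sorted inverted (wrap a b C).
Proof. by rewrite sorted_map; apply: sub_sorted => u v; apply: inverted_wrap. Qed.

Lemma all_wrap n a b C : a < k -> b < k -> all (nonzero_word n) C ->
  all (nonzero_word n.+2) (wrap a b C).
Proof.
move=> a_lt b_lt /allP C_words; apply/allP=> _ /mapP[u /C_words + ->].
rewrite /nonzero_word /digit_word /= size_rcons all_rcons has_rcons /= a_lt b_lt.
by case/andP=> /andP[/eqP -> ->] ->; rewrite eqxx !orbT.
Qed.

Lemma size_blocks C n a m : size (blocks C n a m) = m * (size C).+1.
Proof. by elim: m a => [|m IH] a //=; rewrite size_cat size_map IH mulSn addSn. Qed.

Lemma size_chain_step C n : (size (chain_step C n)).+1 = k * (size C).+1.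
Proof. by rewrite size_cat size_map size_blocks; case: k k_gt1 => // k' _; rewrite mulSn. Qed.

Section Step.
Variables (n : nat) (c : seq nat) (C : seq (seq nat)).
Hypotheses (C_words : all (nonzero_word n) (c :: C)) (C_sorted : sorted inverted (c :: C)).

Lemma path_blocks m a : 0 < a -> a + m = k ->
  path inverted (a.-1 :: rcons (last c C) (k - a)) (blocks (c :: C) n a m).
Proof.
have last_word : nonzero_word n (last c C) by apply: (allP C_words); apply: mem_last.
have head_word : nonzero_word n c by apply: (allP C_words); apply: mem_head.
elim: m a => [|m IH] [|a] // _ am /=.
have -> : k - a.+1 = k.-1 - a by lia.
rewrite inverted_wrap_separator // cat_path last_wrap.
have := sorted_wrap a.+1 (k.-1 - a.+1) C_sorted; rewrite wrap_cons /= => ->.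
rewrite inverted_separator_wrap //; last lia.
have -> : k.-1 - a.+1 = k - a.+2 by lia.
by apply: IH => //; lia.
Qed.

Lemma all_blocks m a : 0 < a -> a + m <= k -> all (nonzero_word n.+2) (blocks (c :: C) n a m).
Proof.
elim: m a => [|m IH] a a_gt0 am //=; rewrite all_cat IH ?andbT; try lia.
have := all_wrap (a := a) (b := k.-1 - a) _ _ C_words.
rewrite wrap_cons /= => -> //; try lia.
rewrite andbT /nonzero_word /digit_word /= size_rcons size_nseq eqxx all_rcons all_nseq /=.
apply/andP; split; [apply/and3P; split => //; lia | by rewrite -lt0n a_gt0].
Qed.

Lemma chain_step_spec : all (nonzero_word n.+2) (chain_step (c :: C) n) /\
                        sorted inverted (chain_step (c :: C) n).
Proof.
split.
  rewrite all_cat all_blocks ?andbT //; last lia.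
  by apply: all_wrap => //; lia.
have := sorted_wrap 0 k.-1 C_sorted; rewrite /chain_step !wrap_cons /= cat_path => ->.
rewrite last_wrap -subn1.
by apply: (path_blocks (a := 1)) => //; lia.
Qed.

End Step.

Lemma chain_spec n : 0 < n ->
  [/\ chain n != [::], all (nonzero_word n) (chain n) & sorted inverted (chain n)].
Proof.
elim/ltn_ind: n => -[|[|[|n]]] // IH _.
- by rewrite /= /nonzero_word /digit_word /= k_gt1.
- split; first by rewrite -size_eq0 size_map size_iota -lt0n ltnW.
  + apply/allP=> w /mapP[a]; rewrite mem_iota => /andP[_ a_lt] ->.
    rewrite /nonzero_word /digit_word /= !andbT orbF; apply/andP; split; first lia.
    by case: a a_lt => //= a; lia.
  + rewrite sorted_map; apply: (sub_in_sorted (P := gtn k) (e := ltn)).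
    * move=> i j; rewrite !unfold_in /= => i_lt j_lt ij.
      rewrite /inverted lexlt_cons ij /= !muln0 !addn0 eqxx andbT; nia.
    * by apply/allP => i; rewrite mem_iota.
    * exact: iota_ltn_sorted.
- rewrite chainSS; have [] := IH n.+1 ltac:(lia) isT.
  case: (chain n.+1) => // c C _ C_words C_sorted.
  by have [] := chain_step_spec C_words C_sorted.
Qed.

Lemma size_chain_odd p : (size (chain p.*2.+1)).+1 = 2 * k ^ p.
Proof.
elim: p => [|p IH] //.
by rewrite doubleS chainSS size_chain_step IH expnS; lia.
Qed.

Lemma size_chain_even p : (size (chain p.*2.+2)).+1 = (k + 1) * k ^ p.
Proof.
elim: p => [|p IH]; first by rewrite /= size_map size_iota; lia.
by rewrite doubleS chainSS size_chain_step IH expnS; lia.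
Qed.

Lemma size_chain l : 0 < l ->
  size (chain l) = if ~~ odd l then (k + 1) * k ^ (l./2 - 1) - 1
                   else 2 * k ^ ((l - 1)./2) - 1.
Proof.
move=> l_gt0; have [[p ->]|[p ->]] : (exists p, l = p.*2.+1) \/ exists p, l = p.*2.+2.
  have := odd_double_half l; case: (odd l) => /= l_eq;
    [left; exists l./2 | right; exists l./2.-1]; lia.
- have := size_chain_odd p; set s := size _.
  by rewrite oddS odd_double /= subSS subn0 doubleK; lia.
- have := size_chain_even p; set s := size _.
  by rewrite -doubleS odd_double doubleK /= subSS subn0; lia.
Qed.

End DecreasingChain.

Section Firing.
Variable k : nat.

Local Notation star := (clos_refl_trans config (fire_step k)).

Definition child_of (v w : vertex) := [&& size w == (size v).+1, prefix v w & last 0 w < k].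

Lemma child_of_rcons_cat v i u : child_of v (rcons v i ++ u) = (u == [::]) && (i < k).
Proof.
rewrite /child_of prefix_catl ?prefix_rcons //= size_cat size_rcons last_cat last_rcons.
case: u => [|x u]; first by rewrite addn0 eqxx.
by rewrite /= -[X in _ == X]addn0 eqn_add2l.
Qed.

Lemma child_of_rcons v i : child_of v (rcons v i) = (i < k).
Proof. by rewrite -[rcons v i]cats0 child_of_rcons_cat. Qed.

Lemma child_of_rcons_last v w : child_of v w -> w = rcons v (last 0 w).
Proof.
case/and3P=> size_w /prefixP[u w_eq] _; subst w; move: size_w; rewrite size_cat => /eqP.
by case: u => [|x [|y u]] /= size_eq; rewrite ?cats1 ?last_rcons //; lia.
Qed.

Definition fire (C : config) v S R : config := fun w =>
  if w == v then R else if child_of v w then nth 0 S (last 0 w) :: C w else C w.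

Lemma fire_step_fire (C : config) v S R :
  size S = k -> perm_eq (C v) (S ++ R) -> sorted leq S -> fire_step k C (fire C v S R).
Proof.
move=> size_S Cv S_sorted; exists v, S, R; split => //.
- by rewrite /fire eqxx.
- move=> i i_lt; rewrite /fire -[rcons v i]cats0 rcons_cat_neq cats0 child_of_rcons i_lt.
  by rewrite last_rcons (sorted_sort leq_trans S_sorted).
- move=> w w_v not_child; rewrite /fire (negbTE w_v); case: ifP => // w_child.
  have /and3P[_ _ last_lt] := w_child.
  by case/negP: (not_child _ last_lt); apply/eqP; exact: child_of_rcons_last.
Qed.

Definition progression a b n := [seq a + b * m | m <- iota 0 n].

Lemma progressionS a b n : progression a b n.+1 = rcons (progression a b n) (a + b * n).
Proof. by rewrite /progression -addn1 iotaD map_cat cats1. Qed.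

Lemma nth_progression a b n i : i < n -> nth 0 (progression a b n) i = a + b * i.
Proof. by move=> i_lt; rewrite (nth_map 0) ?size_iota // nth_iota. Qed.

Lemma sorted_progression a b n : sorted leq (progression a b n).
Proof.
rewrite sorted_map; apply: sub_sorted (iota_ltn_sorted 0 n) => i j /= /ltnW ij.
by rewrite leq_add2l leq_mul2l ij orbT.
Qed.

Lemma fire_progression (C : config) v a b M :
  perm_eq (C v) (progression a b (M * k)) ->
  (forall i, i < k -> C (rcons v i) = [::]) ->
  forall j, j <= M -> exists2 D, star C D &
    [/\ perm_eq (D v) (drop (j * k) (progression a b (M * k))),
        forall i, i < k -> perm_eq (D (rcons v i)) (progression (a + b * i) (b * k) j) &
        forall w, w != v -> ~~ child_of v w -> D w = C w].
Proof.
move=> Cv children; elim=> [|j IH] j_le.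
  by exists C; [exact: rt_refl | split=> [|i /children ->|]; rewrite ?mul0n ?drop0].
have [D CD [Dv Dchildren Dother]] := IH (ltnW j_le).
set P := progression a b (M * k); set S := take k (drop (j * k) P).
have size_P : size P = M * k by rewrite size_map size_iota.
have size_S : size S = k by rewrite size_take size_drop size_P; case: ltnP => //; nia.
have S_sorted : sorted leq S.
  apply: (subseq_sorted leq_trans) (sorted_progression a b (M * k)).
  exact: subseq_trans (take_subseq _ _) (drop_subseq _ _).
have DvSR : perm_eq (D v) (S ++ drop k (drop (j * k) P)) by rewrite cat_take_drop.
exists (fire D v S (drop k (drop (j * k) P))).
  exact: rt_trans CD (rt_step _ _ _ _ (fire_step_fire size_S DvSR S_sorted)).
split.
- by rewrite /fire eqxx drop_drop mulSn addnC.
- move=> i i_lt; rewrite /fire -[rcons v i]cats0 rcons_cat_neq cats0 child_of_rcons i_lt.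
  rewrite last_rcons nth_take // nth_drop nth_progression; last by nia.
  have -> : a + b * (j * k + i) = a + b * i + b * k * j by nia.
  by rewrite progressionS perm_sym perm_rcons perm_cons perm_sym; exact: Dchildren.
- by move=> w w_v w_child; rewrite /fire (negbTE w_v) (negbTE w_child); exact: Dother.
Qed.

Definition leaf_labels n a b (u : vertex) : seq nat :=
  if digit_word k n u then [:: a + b * wordval k u] else [::].

Lemma leaf_labels_cons n a b i u :
  leaf_labels n.+1 a b (i :: u) = if i < k then leaf_labels n (a + b * i) (b * k) u else [::].
Proof.
rewrite /leaf_labels /digit_word /= eqSS; case: ltnP => //= _; last by rewrite andbF.
by case: (_ && _) => //; rewrite mulnDr mulnA addnA.
Qed.

Definition spreads n := forall (C : config) v a b,
  perm_eq (C v) (progression a b (k ^ n)) ->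
  (forall u, u != [::] -> C (v ++ u) = [::]) ->
  exists2 D, star C D &
    (forall w, ~~ prefix v w -> D w = C w) /\ (forall u, D (v ++ u) = leaf_labels n a b u).

Lemma spreads0 : spreads 0.
Proof.
move=> C v a b Cv below; exists C; first exact: rt_refl.
split=> // -[|x u]; last by rewrite below.
by rewrite cats0 (perm_small_eq _ Cv).
Qed.

Lemma spread_children n (D1 : config) v a b :
  spreads n ->
  (forall i, i < k -> perm_eq (D1 (rcons v i)) (progression (a + b * i) (b * k) (k ^ n))) ->
  (forall i u, u != [::] -> D1 (rcons v i ++ u) = [::]) ->
  forall c, c <= k -> exists2 D, star D1 D &
    [/\ forall w, ~~ prefix v w -> D w = D1 w, D v = D1 v,
        forall i u, i < c -> D (rcons v i ++ u) = leaf_labels n (a + b * i) (b * k) u &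
        forall i u, c <= i -> D (rcons v i ++ u) = D1 (rcons v i ++ u)].
Proof.
move=> spread_n children below; elim=> [|c IH] c_le.
  by exists D1; [exact: rt_refl | split].
have [D D1D [Dout Dv Ddone Dtodo]] := IH (ltnW c_le).
have [|u u_nz|D' DD' [D'out D'in]] := spread_n D (rcons v c) (a + b * c) (b * k).
- by rewrite -[rcons v c]cats0 Dtodo // cats0; exact: children.
- by rewrite Dtodo // below.
have D'other i u : i != c -> D' (rcons v i ++ u) = D (rcons v i ++ u).
  by move=> i_c; apply: D'out; rewrite prefix_rcons_cat eq_sym.
exists D'; first exact: rt_trans D1D DD'.
split.
- move=> w w_v; rewrite D'out ?Dout //; apply: contra w_v.
  exact: prefix_trans (prefix_rcons v c).
- by rewrite D'out ?Dv //; apply/negP => /size_prefix; rewrite size_rcons ltnn.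
- move=> i u; rewrite ltnS leq_eqVlt => /orP[/eqP -> | i_lt]; first exact: D'in.
  by rewrite D'other ?Ddone // ltn_eqF.
- by move=> i u c_lt; rewrite D'other ?Dtodo ?gtn_eqF // ltnW.
Qed.

Lemma spreadsS n : spreads n -> spreads n.+1.
Proof.
move=> spread_n C v a b; rewrite expnSr => Cv below.
have [|D1 CD1 [D1v D1children D1other]] := fire_progression Cv _ (leqnn _).
  by move=> i _; rewrite -cats1 below.
have D1v_nil : D1 v = [::].
  by apply/perm_nilP; rewrite drop_oversize // size_map size_iota in D1v.
have D1deep i u : u != [::] -> D1 (rcons v i ++ u) = [::].
  move=> u_nz; rewrite D1other ?rcons_cat_neq ?child_of_rcons_cat ?(negbTE u_nz) //.
  by rewrite cat_rcons below.
have [D D1D [Dout Dv Ddone Dtodo]] := spread_children spread_n D1children D1deep (leqnn k).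
exists D; first exact: rt_trans CD1 D1D.
split.
- move=> w w_v; rewrite Dout // D1other //.
    by apply: contraNneq w_v => ->; exact: prefix_refl.
  by apply: contra w_v => /and3P[].
- case=> [|i u]; first by rewrite cats0 Dv D1v_nil.
  rewrite -cat_rcons leaf_labels_cons; case: ltnP => i_k; first exact: Ddone.
  rewrite Dtodo // D1other ?rcons_cat_neq ?child_of_rcons_cat ?(leq_gtF i_k) ?andbF //.
  by rewrite cat_rcons below.
Qed.

Lemma spread n : spreads n.
Proof. by elim: n => [|n]; [exact: spreads0 | exact: spreadsS]. Qed.

End Firing.

Lemma reachable_leaf_labels k l :
  exists2 C, reachable k l C & forall w, C w = leaf_labels k l 1 1 w.
Proof.
have [|u u_nz|C reach_C [_ C_leaves]] := @spread k l (init_config k l) [::] 1 1.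
- rewrite /init_config eqxx /progression.
  have -> : [seq 1 + 1 * m | m <- iota 0 (k ^ l)] = iota 1 (k ^ l).
    by rewrite -[in RHS](addn0 1) iotaDl; apply: eq_map => m; rewrite mul1n.
  exact: perm_refl.
- by rewrite /init_config /= (negbTE u_nz).
by exists C.
Qed.

Section DigitReversal.
Variables (k l : nat) (C : config).
Hypothesis C_leaves : forall w, C w = leaf_labels k l 1 1 w.

Lemma stable_leaf_labels : 1 < k -> stable k C.
Proof. by move=> k_gt1 w; rewrite C_leaves /leaf_labels; case: ifP => //= _; exact: ltnW. Qed.

Lemma config_perm_leaf_labels :
  config_perm k l C = [seq 1 + wordval k w | w <- layer_words k l].
Proof.
apply/eq_in_map => w; rewrite mem_layer_words C_leaves /leaf_labels => ->.
by rewrite mul1n.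
Qed.

End DigitReversal.

Lemma size_chain_leq_lds k l : 1 < k -> 0 < l ->
  size (chain k l) <= lds [seq 1 + wordval k w | w <- layer_words k l].
Proof.
move=> k_gt1 l_gt0; have [_ /allP chain_words chain_sorted] := chain_spec k_gt1 l_gt0.
rewrite -(size_map (fun w => 1 + wordval k w)); apply: leq_lds.
  apply/map_subseq/(subseq_sorted_subset lexlt_irr lexlt_trans (layer_words_sorted k l)).
    by apply: sub_sorted chain_sorted => u v /and3P[].
  by move=> w /chain_words /andP[w_digits _]; rewrite mem_layer_words.
rewrite sorted_map; apply: sub_sorted chain_sorted => u v /and3P[_ vu _] /=.
by rewrite ltn_add2l.
Qed.

Theorem proposition8p1 (k l : nat) (hk : 2 <= k) (hl : 1 <= l) :
  exists C : config,
    [/\ reachable k l C, stable k C &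
        lds (config_perm k l C) >=
          (if ~~ odd l then (k + 1) * k ^ (l./2 - 1) - 1
           else 2 * k ^ ((l - 1)./2) - 1)].
Proof.
have [C C_reach C_leaves] := reachable_leaf_labels k l.
exists C; split => //; first exact: stable_leaf_labels.
rewrite -(size_chain hk hl) (config_perm_leaf_labels C_leaves).
exact: size_chain_leq_lds.
Qed.
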